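(* Let $\mathbb{K}$ be an algebraically closed field of characteristic $0$, let $p\in\mathbb{K}[x,y]\setminus(\mathbb{K}[x]\cup\mathbb{K}[y])$ be irreducible with $\mathrm{F}(p)\cong\mathbb{K}$, and let $r\in\mathbb{K}[x,y]_p\setminus\langle p\rangle$. Assume that the orbit $\mathcal{O}$ of a pole of $r$ on the curve $C$ associated with $p$ is infinite. Then there is an infinite path in the graph of $\mathcal{O}$ that contains no cycle (its vertices are pairwise distinct), starts at some pole of $r$, and contains no other pole of $r$.
   Context: $\mathbb{K}[x,y]_p$ is the set of $h\in\mathbb{K}(x,y)$ whose reduced denominator is not divisible by $p$; $\langle p\rangle=\{qp:q\in\mathbb{K}[x,y]_p\}$; $\mathrm{F}(p)=\{(f,g)\in\mathbb{K}(x)\times\mathbb{K}(y):f-g\in\langle p\rangle\}$, a field under componentwise operations; $\mathrm{F}(p)\cong\mathbb{K}$ means it consists only of pairs of equal constants. $C\subset\mathbb{P}^1(\mathbb{K})\times\mathbb{P}^1(\mathbb{K})$ is the zero set of the bi-homogenization $x_0^{\deg_x p}y_0^{\deg_y p}p(x_1/x_0,y_1/y_0)$. Orbits are the classes of the smallest equivalence relation on $C$ with $(a,b)\sim(c,d)$ whenever $a=c$ or $b=d$. The graph of an orbit has the elements of the orbit as vertices, two distinct vertices forming an edge when they share a coordinate; a path is a sequence of vertices with consecutive ones adjacent. A point $(\infty,\infty)\in C$ is a pole of $r$ if there is a Puiseux series $\varphi\in\mathbb{K}\{\{x^{-1}\}\}$ with $p(x,\varphi)=0$, $\deg\varphi>0$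 and $\deg r(x,\varphi)>0$ (degree = largest exponent of $x$); a general point $(s_1,s_2)\in C$ is a pole of $r$ if, for a pair $T$ of Möbius transformations sending $(s_1,s_2)$ to $(\infty,\infty)$, $(\infty,\infty)$ is a pole of $r\circ T^{-1}$ on the curve of the numerator of $p\circ T^{-1}$. *)

From HB Require Import structures.
From mathcomp Require Import all_boot all_order all_algebra.
From Stdlib Require Import Relation_Operators.
Set Implicit Arguments. Unset Strict Implicit. Unset Printing Implicit Defensive.
Import Order.TTheory GRing.Theory Num.Theory.
Local Open Scope ring_scope.

Section Defs.
Variable K : fieldType.

(* Bivariate polynomials K[x,y] are {poly {poly K}}: the OUTER variable is y,
   the INNER variable is x.  q`_j`_i is the coefficient of x^i y^j. *)
Notation bipoly := {poly {poly K}}.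
Notation ratfun := {fraction bipoly}.
Definition tofr (q : bipoly) : ratfun := FracField.tofrac q.

Definition polyx (u : {poly K}) : bipoly := u%:P.
Definition polyy (u : {poly K}) : bipoly := map_poly polyC u.

Definition degy (q : bipoly) : nat := (size q).-1.
Definition degx (q : bipoly) : nat := (\max_(j < size q) (size (nth 0%R (polyseq q) j)).-1)%N.

Definition dvd2 (p b : bipoly) : Prop := exists q : bipoly, b = q * p.

Definition irreducible2 (p : bipoly) : Prop :=
  p != 0 /\ p \isn't a GRing.unit /\
  forall a b : bipoly, p = a * b -> a \is a GRing.unit \/ b \is a GRing.unit.

Definition localp (p : bipoly) (h : ratfun) : Prop :=
  exists a b : bipoly, ~ dvd2 p b /\ h = tofr a / tofr b.

Definition idealp (p : bipoly) (h : ratfun) : Prop :=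
  exists q : ratfun, localp p q /\ h = q * tofr p.

(* F(p) ~= K : every (f,g) in K(x) x K(y) with f - g in <p> is a pair of
   equal constants.  f = u/v (u,v in K[x]), g = u'/v' (u',v' in K[y]). *)
Definition Fp_trivial (p : bipoly) : Prop :=
  forall u v u' v' : {poly K}, v != 0 -> v' != 0 ->
    idealp p (tofr (polyx u) / tofr (polyx v) - tofr (polyy u') / tofr (polyy v')) ->
    exists c : K, u = c *: v /\ u' = c *: v'.

(* None = infinity, Some s = s *)
Definition P1 := option K.
Definition hcoord (s : P1) : K * K :=
  match s with None => (0, 1) | Some c => (1, c) end.

(* bi-homogenization x0^dx y0^dy p(x1/x0, y1/y0) evaluated at homogeneous coords *)
Definition bihom_eval (p : bipoly) (X Y : K * K) : K :=
  \sum_(j < size p) \sum_(i < size p`_j)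
     p`_j`_i * X.2 ^+ i * X.1 ^+ (degx p - i) * Y.2 ^+ j * Y.1 ^+ (degy p - j).

Definition onC (p : bipoly) (P : P1 * P1) : Prop :=
  bihom_eval p (hcoord P.1) (hcoord P.2) = 0.

(* Ser e c represents sum_{m>=0} c m * t^(e - m). *)
Record ser := Ser { stop : int; scoef : nat -> K }.

Definition coefAt (f : ser) (e : int) : K :=
  match stop f - e with Posz m => scoef f m | Negz _ => 0 end.

Definition sadd (f g : ser) : ser :=
  let e := Order.max (stop f) (stop g) in
  Ser e (fun m => coefAt f (e - m%:Z) + coefAt g (e - m%:Z)).
Definition smul (f g : ser) : ser :=
  Ser (stop f + stop g) (fun m => \sum_(i < m.+1) scoef f i * scoef g (m - i)).
Definition sconst (a : K) : ser := Ser 0 (fun m => if m == 0%N then a else 0).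
Definition stpow (k : nat) : ser := Ser k%:Z (fun m => if m == 0%N then 1 else 0).
Definition sexp (f : ser) (j : nat) : ser := iter j (smul f) (sconst 1).

Definition szero (f : ser) : Prop := forall e : int, coefAt f e = 0.
Definition has_tdeg (f : ser) (d : int) : Prop :=
  coefAt f d != 0 /\ forall e : int, d < e -> coefAt f e = 0.

(* u(x) with x = t^n *)
Definition evalx (n : nat) (u : {poly K}) : ser :=
  \big[sadd/sconst 0]_(i < size u) smul (sconst u`_i) (stpow (n * i)).
(* q(x, phi) with x = t^n *)
Definition eval2 (n : nat) (q : bipoly) (phi : ser) : ser :=
  \big[sadd/sconst 0]_(j < size q) smul (evalx n q`_j) (sexp phi j).

(* T sends s to infinity: T = id if s = infinity, T(u) = 1/(u - s) otherwise,
   so T^-1(u) = s + 1/u.  transf s1 s2 N M q = x^N y^M q(T1^-1 x, T2^-1 y)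
   (with no factor for an infinite coordinate). *)
Definition mobx (s : P1) (N i : nat) : {poly K} :=
  match s with None => 'X^i | Some c => (c *: 'X + 1) ^+ i * 'X^(N - i) end.
Definition moby (s : P1) (M j : nat) : bipoly :=
  match s with None => 'X^j | Some c => (c%:P *: 'X + 1) ^+ j * 'X^(M - j) end.
Definition transf (s1 s2 : P1) (N M : nat) (q : bipoly) : bipoly :=
  \sum_(j < size q) \sum_(i < size q`_j)
     polyx (q`_j`_i *: mobx s1 N i) * moby s2 M j.

(* pole at (infinity, infinity) of a/b on the curve of P (all already transformed):
   a Puiseux series phi in K{{x^-1}} (phi in t = x^(1/n)) with P(x,phi) = 0,
   deg phi > 0 and deg (a/b)(x,phi) > 0. *)
Definition pole_infty (P a b : bipoly) : Prop :=
  exists (n : nat) (phi : ser), (0 < n)%N /\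
    szero (eval2 n P phi) /\
    (exists d, has_tdeg phi d /\ 0 < d) /\
    (exists da db, has_tdeg (eval2 n a phi) da /\ has_tdeg (eval2 n b phi) db /\ db < da).

Definition pole (p : bipoly) (r : ratfun) (S : P1 * P1) : Prop :=
  onC p S /\
  exists a b : bipoly, b != 0 /\ r = tofr a / tofr b /\
    let N := maxn (degx a) (degx b) in
    let M := maxn (degy a) (degy b) in
    pole_infty (transf S.1 S.2 (degx p) (degy p) p)
               (transf S.1 S.2 N M a) (transf S.1 S.2 N M b).

Definition adjC (p : bipoly) (U V : P1 * P1) : Prop :=
  onC p U /\ onC p V /\ (U.1 = V.1 \/ U.2 = V.2).

Definition curve_orbit (p : bipoly) (S V : P1 * P1) : Prop :=
  onC p S /\ clos_refl_trans _ (adjC p) S V.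

Definition infinite_set (A : P1 * P1 -> Prop) : Prop :=
  ~ exists s : seq (P1 * P1), forall V, A V -> V \in s.

End Defs.

From HB Require Import structures.
From mathcomp Require Import all_boot all_order all_algebra zify ring.
From Stdlib Require Import Relation_Operators Operators_Properties Classical ClassicalEpsilon.
Import Order.TTheory GRing.Theory Num.Theory.
Set Implicit Arguments. Unset Strict Implicit.

(* The graph of an orbit is locally finite: as [p] is irreducible and depends on
   both variables, every horizontal or vertical line meets [C] in finitely many
   points.  The poles of [r] are finitely many as well: those at infinity lie on
   two such lines.  For the affine ones write [r = a0 / b0] with [p] not dividing
   [b0]; a resultant gives [0 <> R] in [K[x]] with [R = u p + v b0], so once [b0]
   is shown to vanish at an affine pole [(c1, c2)], [c1] is a root of [R].
   Reading the Puiseux branch of the pole in [s = t^-1] around [(c1, c2)] turns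
   [t]-degrees into [s]-adic valuations; as [r = a / b] has a pole there, [a] has
   smaller valuation than [b] along the branch, and comparing valuations in
   [a b0 = a0 b] forces [b0(c1, c2) = 0].  Finally König's lemma, applied to the
   infinite connected orbit with its finitely many poles marked, yields a simple
   ray that starts at a pole and never meets another one. *)

Definition finite_pred (T : eqType) (A : T -> Prop) : Prop :=
  exists s : seq T, forall x, A x -> x \in s.

Lemma finite_pred_sub (T : eqType) (A B : T -> Prop) :
  (forall x, A x -> B x) -> finite_pred B -> finite_pred A.
Proof. by move=> AB [s Bs]; exists s => x /AB /Bs. Qed.

Lemma finite_predU (T : eqType) (A B : T -> Prop) :
  finite_pred A -> finite_pred B -> finite_pred (fun x => A x \/ B x).
Proof.
move=> [s As] [t Bt]; exists (s ++ t) => x.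
by rewrite mem_cat => -[/As -> | /Bt ->] //; rewrite orbT.
Qed.

Lemma finite_pred_image (T U : eqType) (f : T -> U) (A : T -> Prop) :
  finite_pred A -> finite_pred (fun u => exists2 t, A t & u = f t).
Proof. by move=> [s As]; exists (map f s) => _ [t /As st ->]; apply: map_f. Qed.

Lemma finite_pred_bigcup (I T : eqType) (l : seq I) (A : I -> T -> Prop) :
  (forall i, i \in l -> finite_pred (A i)) ->
  finite_pred (fun x => exists2 i, i \in l & A i x).
Proof.
elim: l => [|i l IHl] Afin; first by exists [::] => x [].
have Afin_l j : j \in l -> finite_pred (A j) by move=> lj; apply: Afin; rewrite inE lj orbT.
apply: finite_pred_sub (finite_predU (Afin i (mem_head _ _)) (IHl Afin_l)) => x [j].
by rewrite inE => /orP[/eqP-> | lj] Ajx; [left | right; exists j].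
Qed.

Lemma dependent_choice (A : Type) (Inv : A -> Prop) (R : A -> A -> Prop) (a0 : A) :
  Inv a0 -> (forall a, Inv a -> exists b, Inv b /\ R a b) ->
  exists f : nat -> A, f 0 = a0 /\ forall n, Inv (f n) /\ R (f n) (f n.+1).
Proof.
move=> Inv0 ext.
pose next a := epsilon (inhabits a0) (fun b => Inv a -> Inv b /\ R a b).
have next_spec a : Inv a -> Inv (next a) /\ R a (next a).
  move=> Inva; apply: (epsilon_spec (inhabits a0) (fun b => Inv a -> Inv b /\ R a b)) => //.
  by have [b ?] := ext a Inva; exists b.
exists (fun n => iter n next a0); split => // n.
suff Invn : Inv (iter n next a0) by split => //; apply: (next_spec _ Invn).2.
by elim: n => //= n /next_spec[].
Qed.

(* König's lemma, relative to a finite set [P] of marked vertices. *)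
Section MarkedRay.
Variables (T : eqType) (E : T -> T -> Prop) (P : T -> Prop) (S : T).
Hypothesis E_finite : forall u, finite_pred (E u).
Hypothesis P_finite : finite_pred P.
Hypothesis PS : P S.
Hypothesis component_infinite : ~ finite_pred (clos_refl_trans T E S).

Definition free (X : seq T) v := v \notin X /\ ~ P v.

Inductive free_walk (X : seq T) : T -> T -> Prop :=
| free_walk0 u : free X u -> free_walk X u u
| free_walkS u v w : free X u -> E u v -> free_walk X v w -> free_walk X u w.

Definition infinite_reach (X : seq T) u := ~ finite_pred (free_walk X u).

Lemma free_walk_free X u w : free_walk X u w -> free X u.
Proof. by case. Qed.

Lemma infinite_reach_free X u : infinite_reach X u -> free X u.
Proof.
move=> reachXu; apply: NNPP => notfree; apply: reachXu.
by exists [::] => w /free_walk_free.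
Qed.

Lemma free_walk_sub X Y u w :
  (forall y, free X y -> free Y y) -> free_walk X u w -> free_walk Y u w.
Proof.
move=> XY; elim=> [y /XY/free_walk0 // | y v w' /XY Yy Eyv _ IH].
exact: free_walkS Eyv IH.
Qed.

Lemma free_walk_rcons X u v w : free_walk X u v -> E v w -> free X w -> free_walk X u w.
Proof.
elim=> [y Xy | y y' w' Xy Eyy' _ IH] Evw Xw.
  exact: free_walkS Xy Evw (free_walk0 Xw).
exact: free_walkS Xy Eyy' (IH Evw Xw).
Qed.

Lemma free_walk_cons X u x w : free_walk X x w ->
  [\/ w = u, exists2 v, E u v & free_walk (u :: X) v w | free_walk (u :: X) x w].
Proof.
have freeXu y : free X y -> y != u -> free (u :: X) y.
  by move=> [Xy Py] yu; split; rewrite // inE negb_or yu.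
elim=> [y Xy | y v w' Xy Eyv _ [-> | vw | hw]].
- by have [->|/(freeXu _ Xy)/free_walk0] := eqVneq y u; [apply: Or31 | apply: Or33].
- exact: Or31.
- exact: Or32.
- have [yu | /(freeXu _ Xy) uXy] := eqVneq y u; first by rewrite yu in Eyv; apply: Or32; exists v.
  by apply: Or33; apply: free_walkS Eyv hw.
Qed.

Lemma infinite_reach_step X u : infinite_reach X u -> exists v, E u v /\ infinite_reach (u :: X) v.
Proof.
move=> reachXu; apply: NNPP => none; apply: reachXu.
have [s Es] := E_finite u.
have fin_next : forall v, v \in s -> finite_pred (fun w => E u v /\ free_walk (u :: X) v w).
  move=> v _; have [Euv | notEuv] := classic (E u v); last by exists [::] => w [].
  have [reach_v | /NNPP] := classic (infinite_reach (u :: X) v).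
    by case: none; exists v.
  by apply: finite_pred_sub => w [].
have fin_u : finite_pred (fun w => w = u) by exists [:: u] => w ->; apply: mem_head.
apply: finite_pred_sub (finite_predU (finite_pred_bigcup fin_next) fin_u).
move=> w /(free_walk_cons u) [-> | [v Euv vw] | uw]; [by right | by left; exists v; rewrite ?Es |].
by have [] := free_walk_free uw; rewrite mem_head.
Qed.

Lemma component_free_walk w : clos_refl_trans T E S w ->
  P w \/ exists s v, [/\ clos_refl_trans T E S s, P s, E s v & free_walk [::] v w].
Proof.
move=> Sw; elim: (clos_rt_rtn1 _ _ _ _ Sw) => [|x y Exy Sx IH]; first by left.
have [Py | notPy] := classic (P y); first by left.
have freey : free [::] y by [].
right; case: IH => [Px | [s [v [Ss Ps Esv vx]]]].
  by exists x, y; split; [exact: clos_rtn1_rt | | | exact: free_walk0].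
by exists s, v; split => //; apply: free_walk_rcons Exy freey.
Qed.

Lemma infinite_reach_from_marked :
  exists s v, [/\ clos_refl_trans T E S s, P s, E s v & infinite_reach [::] v].
Proof.
apply: NNPP => none; apply: component_infinite.
have [sP sPP] := P_finite.
have fin_from s : s \in sP -> finite_pred (fun w =>
    exists v, [/\ clos_refl_trans T E S s, P s, E s v & free_walk [::] v w]).
  move=> _; have [sE sEE] := E_finite s.
  have fin_via v : v \in sE -> finite_pred (fun w =>
      [/\ clos_refl_trans T E S s, P s, E s v & free_walk [::] v w]).
    move=> _; have [[Ss Ps Esv] | notsv] :=
      classic [/\ clos_refl_trans T E S s, P s & E s v]; last first.
      by exists [::] => w [Ss Ps Esv _]; case: notsv.
    have [reach_v | /NNPP] := classic (infinite_reach [::] v).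
      by case: none; exists s, v.
    by apply: finite_pred_sub => w [].
  apply: finite_pred_sub (finite_pred_bigcup fin_via) => w [v [Ss Ps Esv vw]].
  by exists v; rewrite ?sEE.
apply: finite_pred_sub (finite_predU P_finite (finite_pred_bigcup fin_from)) => w.
case/component_free_walk => [Pw | [s [v [Ss Ps Esv vw]]]]; first by left.
by right; exists s; [apply: sPP | exists v].
Qed.

Lemma marked_ray : exists f : nat -> T,
  [/\ forall i, clos_refl_trans T E S (f i), injective f,
      forall i, E (f i) (f i.+1), P (f 0) & forall i, (0 < i)%N -> ~ P (f i)].
Proof.
have [s0 [v0 [Ss0 Ps0 Es0v0 reach_v0]]] := infinite_reach_from_marked.
have reach_v0' : infinite_reach [:: s0] v0.
  move=> fin; apply: reach_v0; move: fin; apply: finite_pred_sub.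
  move=> w; apply: free_walk_sub => y [_ Py]; split => //.
  by rewrite inE; apply/eqP => ys0; rewrite ys0 in Py.
have [f [f0 f_spec]] : exists f : nat -> T * seq T, f 0 = (v0, [:: s0]) /\
    forall n, infinite_reach (f n).2 (f n).1 /\
              ((f n.+1).2 = (f n).1 :: (f n).2 /\ E (f n).1 (f n.+1).1).
  apply: (@dependent_choice _ (fun a => infinite_reach a.2 a.1)
    (fun a b => b.2 = a.1 :: a.2 /\ E a.1 b.1) (v0, [:: s0]) reach_v0').
  by move=> -[u X] /infinite_reach_step[v [Euv reach_v]]; exists (v, u :: X).
pose g i := if i is i'.+1 then (f i').1 else s0.
have visited j i : (i <= j)%N -> g i \in (f j).2.
  elim: j i => [|j IHj] i; first by rewrite leqn0 => /eqP->; rewrite /g f0 mem_head.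
  rewrite (f_spec j).2.1 inE leq_eqVlt => /orP[/eqP-> | /IHj ->]; last by rewrite orbT.
  by rewrite eqxx.
have g_free j : free (f j).2 (g j.+1) by apply: infinite_reach_free; have [] := f_spec j.
have g_edge i : E (g i) (g i.+1).
  by case: i => [|i] /=; [rewrite f0 | have [_ []] := f_spec i].
exists g; split => //.
- by elim=> [|i IHi] //; apply: rt_trans IHi (rt_step _ _ _ _ (g_edge i)).
- suff neq i j : (i < j)%N -> g i != g j.
    move=> i j gij; case: (ltngtP i j) => // [/neq | /neq]; by rewrite gij eqxx.
  case: j => [|j] // ij; have [notin _] := g_free j.
  by apply: contraNneq notin => <-; apply: visited.
- by case=> [|i] // _; have [] := g_free i.
Qed.

End MarkedRay.

Local Open Scope ring_scope.

Lemma eq_sub_absz (S e : int) : e <= S -> e = S - `|S - e|%N%:Z.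
Proof. move=> h; rewrite gez0_abs ?subr_ge0 //; lia. Qed.

Section Series.
Variable K : fieldType.
Implicit Types f g : ser K.

Lemma coefAt_gt f e : stop f < e -> coefAt f e = 0.
Proof.
rewrite /coefAt; case E: (stop f - e) => [m|m] // lt.
have : 0 <= stop f - e by rewrite E.
lia.
Qed.

Lemma coefAt_sub f (m : nat) : coefAt f (stop f - m%:Z) = scoef f m.
Proof. by rewrite /coefAt opprB addrC subrK. Qed.

Lemma coefAt_sadd f g e : coefAt (sadd f g) e = coefAt f e + coefAt g e.
Proof.
rewrite /sadd; set E := Order.max _ _.
have hf : stop f <= E by rewrite /E le_max lexx.
have hg : stop g <= E by rewrite /E le_max lexx orbT.
case: (lerP e E) => he; first by rewrite (eq_sub_absz he) (coefAt_sub (Ser _ _)).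
rewrite !coefAt_gt //= ?addr0 //; lia.
Qed.

Lemma coefAt_sconst0 e : coefAt (sconst (0 : K)) e = 0.
Proof. by rewrite /coefAt; case: (_ - _) => [[|m]|m]. Qed.

Definition pad f := Ser (stop f + 1) (fun m => if m is m'.+1 then scoef f m' else 0).

Lemma coefAt_pad f : coefAt (pad f) =1 coefAt f.
Proof.
move=> e; case: (lerP e (stop f + 1)) => he; last first.
  by rewrite !coefAt_gt //; lia.
rewrite (eq_sub_absz he); set M := `|_|%N.
rewrite (coefAt_sub (pad f)) /=.
case: M => [|m]; first by rewrite coefAt_gt //; lia.
have -> : stop f + 1 - m.+1%:Z = stop f - m%:Z by lia.
by rewrite coefAt_sub.
Qed.

Lemma smul_scoef_ext f1 f2 g : stop f1 = stop f2 -> scoef f1 =1 scoef f2 ->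
  coefAt (smul f1 g) =1 coefAt (smul f2 g).
Proof.
move=> hs hc e; rewrite /coefAt /smul /= hs; case: (_ - _) => // m.
by apply: eq_bigr => i _; rewrite hc.
Qed.

Lemma coefAt_smul_pad f g : coefAt (smul (pad f) g) =1 coefAt (smul f g).
Proof.
move=> e; case: (lerP e (stop f + 1 + stop g)) => he; last first.
  by rewrite !coefAt_gt //=; lia.
rewrite (eq_sub_absz he); set M := `|_|%N.
have -> : stop f + 1 + stop g = stop (smul (pad f) g) by [].
rewrite coefAt_sub /= big_ord_recl /= mul0r add0r.
case: M => [|m]; first by rewrite big_ord0 coefAt_gt //=; lia.
have -> : stop f + 1 + stop g - m.+1%:Z = stop (smul f g) - m%:Z by rewrite /=; lia.
rewrite coefAt_sub /=; apply: eq_bigr => i _.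
by rewrite /bump /= add1n subSS.
Qed.

Lemma coefAt_smulC f g : coefAt (smul f g) =1 coefAt (smul g f).
Proof.
move=> e; case: (lerP e (stop f + stop g)) => he; last first.
  by rewrite !coefAt_gt //=; lia.
rewrite (eq_sub_absz he); set M := `|_|%N.
have -> : stop f + stop g = stop (smul f g) by [].
rewrite coefAt_sub.
have -> : stop (smul f g) = stop (smul g f) by rewrite /= addrC.
rewrite coefAt_sub /= (reindex_inj rev_ord_inj) /=; apply: eq_bigr => i _.
rewrite subSS mulrC subKn //; exact: (ltn_ord i).
Qed.

Lemma stop_iter_pad j f : stop (iter j pad f) = stop f + j%:Z.
Proof. elim: j => [|j IH] /=; first by rewrite addr0. by rewrite IH; lia. Qed.

Lemma coefAt_iter_pad j f : coefAt (iter j pad f) =1 coefAt f.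
Proof. elim: j => [|j IH] e //=. by rewrite coefAt_pad IH. Qed.

Lemma coefAt_smul_iter_pad j f g : coefAt (smul (iter j pad f) g) =1 coefAt (smul f g).
Proof. elim: j => [|j IH] e //=. by rewrite coefAt_smul_pad IH. Qed.

(* [smul] acts on representations; padding both factors to a common [stop]
   shows that it only depends on the coefficients. *)
Lemma smul_extl f1 f2 g : coefAt f1 =1 coefAt f2 ->
  coefAt (smul f1 g) =1 coefAt (smul f2 g).
Proof.
move=> h e.
pose U := Order.max (stop f1) (stop f2).
have h1 : stop f1 <= U by rewrite /U le_max lexx.
have h2 : stop f2 <= U by rewrite /U le_max lexx orbT.
pose j1 := `|U - stop f1|%N; pose j2 := `|U - stop f2|%N.
have s1 : stop (iter j1 pad f1) = U by rewrite stop_iter_pad /j1 gez0_abs ?subr_ge0 //; lia.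
have s2 : stop (iter j2 pad f2) = U by rewrite stop_iter_pad /j2 gez0_abs ?subr_ge0 //; lia.
rewrite -(coefAt_smul_iter_pad j1) -(coefAt_smul_iter_pad j2 f2).
apply: smul_scoef_ext; first by rewrite s1 s2.
move=> m; rewrite -(coefAt_sub (iter j1 pad f1)) -(coefAt_sub (iter j2 pad f2)) s1 s2.
by rewrite !coefAt_iter_pad h.
Qed.

Lemma smul_ext f1 f2 g1 g2 : coefAt f1 =1 coefAt f2 -> coefAt g1 =1 coefAt g2 ->
  coefAt (smul f1 g1) =1 coefAt (smul f2 g2).
Proof.
move=> hf hg e; rewrite (smul_extl g1 hf) coefAt_smulC (smul_extl f2 hg).
by rewrite coefAt_smulC.
Qed.

Definition tdeg_le f (U : int) := forall e, U < e -> coefAt f e = 0.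

Definition restop (U : int) f := Ser U (fun m => coefAt f (U - m%:Z)).

Lemma coefAt_restop U f : tdeg_le f U -> coefAt (restop U f) =1 coefAt f.
Proof.
move=> hb e; case: (lerP e U) => he; last by rewrite hb // coefAt_gt.
by rewrite (eq_sub_absz he) (coefAt_sub (restop U f)).
Qed.

Lemma coefAt_smul_tdeg_le f g U1 U2 (m : nat) : tdeg_le f U1 -> tdeg_le g U2 ->
  coefAt (smul f g) (U1 + U2 - m%:Z) =
  \sum_(i < m.+1) coefAt f (U1 - i%:Z) * coefAt g (U2 - (m - i)%N%:Z).
Proof.
move=> hf hg.
rewrite -(smul_ext (coefAt_restop hf) (coefAt_restop hg)).
by rewrite (coefAt_sub (smul (restop U1 f) (restop U2 g))).
Qed.

Lemma tdeg_le_smul f g U1 U2 : tdeg_le f U1 -> tdeg_le g U2 -> tdeg_le (smul f g) (U1 + U2).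
Proof.
move=> hf hg e he.
rewrite -(smul_ext (coefAt_restop hf) (coefAt_restop hg)).
by rewrite coefAt_gt.
Qed.

Lemma tdeg_le_sadd f g U : tdeg_le f U -> tdeg_le g U -> tdeg_le (sadd f g) U.
Proof. by move=> hf hg e he; rewrite coefAt_sadd hf ?hg ?addr0. Qed.

Lemma tdeg_le_trans f U U' : tdeg_le f U -> U <= U' -> tdeg_le f U'.
Proof. move=> h hu e he; apply: h; lia. Qed.

(* [approx k U f P]: [f] has t-degree at most [U], and [P] agrees modulo [s^k]
   with the coefficients of [f] at [t^U, t^(U-1), ...] read as a polynomial in
   [s = 1/t]; truncation is then a ring morphism modulo [s^k]. *)
Definition trunc (U : int) (k : nat) f : {poly K} := \poly_(m < k) coefAt f (U - m%:Z).
Definition eq_upto k (P Q : {poly K}) := forall m, (m < k)%N -> P`_m = Q`_m.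
Definition approx k U f P := tdeg_le f U /\ eq_upto k (trunc U k f) P.

Lemma eq_upto_trans k P Q R : eq_upto k P Q -> eq_upto k Q R -> eq_upto k P R.
Proof. by move=> h1 h2 m hm; rewrite h1 ?h2. Qed.
Lemma eq_upto_mul k P Q P' Q' : eq_upto k P P' -> eq_upto k Q Q' -> eq_upto k (P * Q) (P' * Q').
Proof.
move=> h1 h2 m hm; rewrite !coefM; apply: eq_bigr => i _.
have hi : (i < k)%N by apply: leq_ltn_trans hm; rewrite -ltnS.
rewrite h1 // h2 //; apply: leq_ltn_trans hm; exact: leq_subr.
Qed.

Lemma approx_trunc k U f : tdeg_le f U -> approx k U f (trunc U k f).
Proof. by []. Qed.

Lemma coef_trunc U k f m : (m < k)%N -> (trunc U k f)`_m = coefAt f (U - m%:Z).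
Proof. by move=> h; rewrite coef_poly h. Qed.

Lemma approx_add k U f g P Q : approx k U f P -> approx k U g Q -> approx k U (sadd f g) (P + Q).
Proof.
move=> [hf ef] [hg eg]; split; first exact: tdeg_le_sadd.
move=> m hm; rewrite coef_trunc // coefAt_sadd coefD -ef // -eg //.
by rewrite !coef_trunc.
Qed.

Lemma approx_mul k U1 U2 f g P Q : approx k U1 f P -> approx k U2 g Q ->
  approx k (U1 + U2) (smul f g) (P * Q).
Proof.
move=> [hf ef] [hg eg]; split; first exact: tdeg_le_smul.
apply: eq_upto_trans (eq_upto_mul ef eg).
move=> m hm; rewrite coef_trunc // coefAt_smul_tdeg_le // coefM; apply: eq_bigr => i _.
have hi : (i < k)%N by apply: leq_ltn_trans hm; rewrite -ltnS.
rewrite !coef_trunc //; apply: leq_ltn_trans hm; exact: leq_subr.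
Qed.

Lemma approx_shift k U f P (j : nat) : approx k U f P -> approx k (U + j%:Z) f ('X^j * P).
Proof.
move=> [hf ef]; split; first by apply: (tdeg_le_trans hf); lia.
move=> m hm; rewrite coef_trunc // coefXnM.
case: ltnP => hmj; first by rewrite hf //; lia.
rewrite -ef; last by apply: leq_ltn_trans hm; exact: leq_subr.
rewrite coef_trunc; last by apply: leq_ltn_trans hm; exact: leq_subr.
congr coefAt; lia.
Qed.

Lemma approx_const k c : approx k 0 (sconst c) c%:P.
Proof.
split; first by move=> e he; rewrite coefAt_gt.
move=> m hm; rewrite coef_trunc // coefC.
have -> : (0 : int) - m%:Z = stop (sconst c) - m%:Z by [].
by rewrite coefAt_sub.
Qed.

Lemma approx_stpow k j : approx k j%:Z (stpow K j) 1.
Proof.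
split; first by move=> e he; rewrite coefAt_gt.
move=> m hm; rewrite coef_trunc // coef1.
have -> : j%:Z - m%:Z = stop (stpow K j) - m%:Z by [].
by rewrite coefAt_sub /=; case: (m == 0)%N.
Qed.

Lemma approx0 k U : approx k U (sconst 0) 0.
Proof.
split; first by move=> e _; rewrite coefAt_sconst0.
by move=> m hm; rewrite coef_trunc // coefAt_sconst0 coef0.
Qed.

Lemma approx_big k U (I : Type) (r : seq I) (F : I -> ser K) (P : I -> {poly K}) :
  (forall i, approx k U (F i) (P i)) ->
  approx k U (\big[@sadd K/sconst 0]_(i <- r) F i) (\sum_(i <- r) P i).
Proof.
move=> h; apply: (big_ind2 (approx k U)); first exact: approx0.
  by move=> ? ? ? ?; apply: approx_add.
by move=> i _; apply: h.
Qed.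

Lemma approx_sexp k (d : int) phi Phi (j : nat) : approx k d phi Phi ->
  approx k (d * j%:Z) (sexp phi j) (Phi ^+ j).
Proof.
move=> h; elim: j => [|j IH].
  by rewrite mulr0 expr0; apply: approx_const.
have -> : d * j.+1%:Z = d + d * j%:Z by lia.
by rewrite exprS; apply: approx_mul.
Qed.

Definition evalx_poly (n N : nat) (u : {poly K}) : {poly K} :=
  \sum_(i < size u) (u`_i)%:P * 'X^(n * (N - i))%N.
Definition eval2_poly (n d N M : nat) (Phi : {poly K}) (Q : {poly {poly K}}) : {poly K} :=
  \sum_(j < size Q) evalx_poly n N Q`_j * (Phi ^+ j * 'X^(d * (M - j))%N).

Lemma approx_evalx k n N (u : {poly K}) : (size u <= N.+1)%N ->
  approx k (n * N)%N%:Z (evalx n u) (evalx_poly n N u).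
Proof.
move=> hs; rewrite /evalx /evalx_poly; apply: approx_big => i.
have hi : (i <= N)%N by rewrite -ltnS; apply: leq_trans hs.
have := approx_shift (n * (N - i)) (approx_mul (approx_const k u`_i) (approx_stpow k (n * i))).
by rewrite mulr1 mulrC add0r -PoszD -mulnDr subnKC.
Qed.

Definition bideg_le (N M : nat) (Q : {poly {poly K}}) :=
  (size Q <= M.+1)%N /\ forall j, (size (Q`_j)%R <= N.+1)%N.

Lemma approx_eval2 k n (d : nat) N M (Q : {poly {poly K}}) phi (Phi : {poly K}) :
  bideg_le N M Q -> approx k d%:Z phi Phi ->
  approx k (n * N + d * M)%N%:Z (eval2 n Q phi) (eval2_poly n d N M Phi Q).
Proof.
move=> [hQ hQj] hphi; rewrite /eval2 /eval2_poly; apply: approx_big => j.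
have hj : (j <= M)%N by rewrite -ltnS; apply: leq_trans hQ.
have := approx_shift (d * (M - j)) (approx_mul (approx_evalx k n (hQj j)) (approx_sexp j hphi)).
have -> : 'X^(d * (M - j))%N * (evalx_poly n N Q`_j * Phi ^+ j) =
  evalx_poly n N Q`_j * (Phi ^+ j * 'X^(d * (M - j))%N) by rewrite mulrC mulrA.
by rewrite -!PoszM -!PoszD -addnA -mulnDr subnKC.
Qed.

End Series.

Section Bivariate.
Variable K : fieldType.
Implicit Types (q Q : {poly {poly K}}) (a b z : K).

Definition ev2 Q a b : K := (Q.[b%:P]).[a].

Lemma ev2E Q a b :
  ev2 Q a b = \sum_(j < size Q) \sum_(i < size Q`_j) Q`_j`_i * a ^+ i * b ^+ j.
Proof.
rewrite /ev2 (horner_coef Q) horner_sum; apply: eq_bigr => j _.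
by rewrite hornerM -rmorphXn hornerC horner_coef mulr_suml.
Qed.

Lemma ev2D Q1 Q2 a b : ev2 (Q1 + Q2) a b = ev2 Q1 a b + ev2 Q2 a b.
Proof. by rewrite /ev2 !hornerD. Qed.

Lemma ev2M Q1 Q2 a b : ev2 (Q1 * Q2) a b = ev2 Q1 a b * ev2 Q2 a b.
Proof. by rewrite /ev2 !hornerM. Qed.

Lemma ev2C (u : {poly K}) a b : ev2 u%:P a b = u.[a].
Proof. by rewrite /ev2 hornerC. Qed.

Lemma ev2_transf c1 c2 N M q a b :
  ev2 (transf (Some c1) (Some c2) N M q) a b =
  \sum_(j < size q) \sum_(i < size q`_j)
     q`_j`_i * ((c1 * a + 1) ^+ i * a ^+ (N - i)) * ((c2 * b + 1) ^+ j * b ^+ (M - j)).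
Proof.
rewrite /ev2 /transf !horner_sum; apply: eq_bigr => j _.
rewrite !horner_sum; apply: eq_bigr => i _.
by rewrite /mobx /moby !hornerE.
Qed.

Lemma size_le_degy q M : (degy q <= M)%N -> (size q <= M.+1)%N.
Proof. by rewrite -ltnS; apply: leq_trans; rewrite leqSpred. Qed.

Lemma bideg_le_deg q N M : (degx q <= N)%N -> (degy q <= M)%N -> bideg_le N M q.
Proof.
move=> qN /size_le_degy qM; split=> [//|j].
have [jq | qj] := ltnP j (size q); last by rewrite nth_default ?size_poly0.
apply: leq_trans (leqSpred _) _; rewrite ltnS; apply: leq_trans qN.
exact: (@leq_bigmax _ (fun i : 'I_(size q) => (size q`_i).-1) (Ordinal jq)).
Qed.

Lemma bideg_le_transf c1 c2 N M q :
  bideg_le N M q -> bideg_le N M (transf (Some c1) (Some c2) N M q).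
Proof.
move=> [qM qN]; have size_lin (c : K) : (size (c *: 'X + 1 : {poly K})%R <= 2)%N.
  apply: leq_trans (size_polyD _ _) _; rewrite geq_max size_poly1 andbT.
  by apply: leq_trans (size_scale_leq _ _) _; rewrite size_polyX.
have size_hom (c : K) i L :
    (i <= L)%N -> (size ((c *: 'X + 1) ^+ i * 'X^(L - i) : {poly K})%R <= L.+1)%N.
  move=> iL; apply: leq_trans (size_polyMleq _ _) _; rewrite size_polyXn.
  have := size_poly_exp_leq (c *: 'X + 1) i; have := size_lin c.
  set s := size _; set t := size _; nia.
have map_moby j : moby (Some c2) M j = map_poly polyC ((c2 *: 'X + 1) ^+ j * 'X^(M - j)).
  by rewrite /moby rmorphM !rmorphXn rmorphD rmorph1 /= map_polyZ map_polyX.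
have bideg_le0 : bideg_le N M (0 : {poly {poly K}}) by split=> [|j]; rewrite ?coef0 size_poly0.
have bideg_leD P Q : bideg_le N M P -> bideg_le N M Q -> bideg_le N M (P + Q).
  move=> [PM PN] [QM QN]; split=> [|j]; last rewrite coefD.
    by apply: leq_trans (size_polyD _ _) _; rewrite geq_max PM QM.
  by apply: leq_trans (size_polyD _ _) _; rewrite geq_max PN QN.
rewrite /transf; apply: (big_ind (bideg_le N M)) => // j _.
apply: (big_ind (bideg_le N M)) => // i _.
have jM : (j <= M)%N by rewrite -ltnS; apply: leq_trans qM.
have iN : (i <= N)%N by rewrite -ltnS; apply: leq_trans (qN j).
rewrite map_moby /polyx /mobx; split=> [|l].
  apply: leq_trans (size_polyMleq _ _) _; rewrite size_map_polyC.
  have := size_polyC_leq1 (q`_j`_i *: mobx (Some c1) N i); have := size_hom c2 _ _ jM.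
  set s := size _; set t := size _; lia.
rewrite coefCM coef_map /=; apply: leq_trans (size_polyMleq _ _) _.
have := size_polyC_leq1 ((c2 *: 'X + 1) ^+ j * 'X^(M - j))`_l.
have := leq_trans (size_scale_leq q`_j`_i _) (size_hom c1 _ _ iN).
set s := size _; set t := size _; lia.
Qed.

(* The branch of [q] through [(c1, c2)] along [x = c1 + s^n], [y = c2 + s^d / Phi(s)],
   cleared of the denominator [Phi^M]. *)
Definition branch_poly (c1 c2 : K) (n d M : nat) (Phi : {poly K}) q : {poly K} :=
  \sum_(j < size q) \sum_(i < size q`_j)
     (q`_j`_i)%:P * ('X^n + c1%:P) ^+ i * ((c2 *: Phi + 'X^d) ^+ j * Phi ^+ (M - j)).

Lemma branch_poly_horner c1 c2 n d M Phi q z : Phi.[z] != 0 -> (size q <= M.+1)%N ->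
  (branch_poly c1 c2 n d M Phi q).[z] =
  Phi.[z] ^+ M * ev2 q (c1 + z ^+ n) (c2 + z ^+ d / Phi.[z]).
Proof.
move=> Phiz qM; rewrite ev2E mulr_sumr horner_sum; apply: eq_bigr => j _.
have jM : (j <= M)%N by rewrite -ltnS; apply: leq_trans qM.
have clear_denom (P u v c : K) : P != 0 ->
    c * u * (c2 * P + v) ^+ j * P ^+ (M - j) = P ^+ M * c * u * (c2 + v / P) ^+ j.
  move=> P_neq0; have -> : c2 + v / P = (c2 * P + v) / P by field.
  have -> : P ^+ M = P ^+ j * P ^+ (M - j) by rewrite -exprD subnKC.
  by rewrite expr_div_n; field; rewrite expf_neq0.
rewrite mulr_sumr horner_sum; apply: eq_bigr => i _.
by rewrite !hornerE [c1 + _]addrC; apply: clear_denom.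
Qed.

Lemma branch_poly_horner0 c1 c2 n d M Phi q : (0 < n)%N -> (0 < d)%N ->
  (size q <= M.+1)%N -> (branch_poly c1 c2 n d M Phi q).[0] = Phi.[0] ^+ M * ev2 q c1 c2.
Proof.
move=> n_gt0 d_gt0 qM; rewrite ev2E mulr_sumr horner_sum; apply: eq_bigr => j _.
have jM : (j <= M)%N by rewrite -ltnS; apply: leq_trans qM.
have expand (P u c : K) : c * u * (c2 * P) ^+ j * P ^+ (M - j) = P ^+ M * c * u * c2 ^+ j.
  have -> : P ^+ M = P ^+ j * P ^+ (M - j) by rewrite -exprD subnKC.
  by rewrite exprMn; ring.
rewrite mulr_sumr horner_sum; apply: eq_bigr => i _.
rewrite !hornerE !expr0n !eqn0Ngt n_gt0 d_gt0 /= add0r addr0; exact: expand.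
Qed.

Lemma eval2_poly_horner n d N M Phi Q z : z != 0 -> bideg_le N M Q ->
  (eval2_poly n d N M Phi Q).[z] =
  z ^+ (n * N) * z ^+ (d * M) * ev2 Q (z ^+ n)^-1 (Phi.[z] / z ^+ d).
Proof.
move=> z_neq0 [QM QN]; pose w := z ^+ n; pose v := z ^+ d; pose P := Phi.[z].
have [w_neq0 v_neq0] : w != 0 /\ v != 0 by rewrite !expf_neq0.
rewrite ev2E mulr_sumr horner_sum; apply: eq_bigr => j _.
have jM : (j <= M)%N by rewrite -ltnS; apply: leq_trans QM.
rewrite hornerM horner_sum mulr_suml mulr_sumr; apply: eq_bigr => i _.
have iN : (i <= N)%N by rewrite -ltnS; apply: leq_trans (QN j).
have homog (c : K) : c * w ^+ (N - i) * (P ^+ j * v ^+ (M - j)) =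
    w ^+ N * v ^+ M * (c * w^-1 ^+ i * (P / v) ^+ j).
  have -> : w ^+ N = w ^+ i * w ^+ (N - i) by rewrite -exprD subnKC.
  have -> : v ^+ M = v ^+ j * v ^+ (M - j) by rewrite -exprD subnKC.
  by rewrite exprVn expr_div_n; field; rewrite !expf_neq0.
by rewrite !hornerE !exprM -/w -/v -/P; move: (homog Q`_j`_i); rewrite !mulrA.
Qed.

(* For a transformed [q] the powers of [s] cancel against the Moebius denominators. *)
Lemma eval2_poly_transf_horner n d N M Phi c1 c2 q z : z != 0 -> bideg_le N M q ->
  (eval2_poly n d N M Phi (transf (Some c1) (Some c2) N M q)).[z] =
  (branch_poly c1 c2 n d M Phi q).[z].
Proof.
move=> z_neq0 qNM; pose w := z ^+ n; pose v := z ^+ d; pose P := Phi.[z].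
have [w_neq0 v_neq0] : w != 0 /\ v != 0 by rewrite !expf_neq0.
rewrite eval2_poly_horner //; last exact: bideg_le_transf.
rewrite ev2_transf mulr_sumr horner_sum.
apply: eq_bigr => j _; have jM : (j <= M)%N by rewrite -ltnS; apply: leq_trans qNM.1.
rewrite mulr_sumr horner_sum; apply: eq_bigr => i _.
have iN : (i <= N)%N by rewrite -ltnS; apply: leq_trans (qNM.2 j).
have dehomog (c : K) : w ^+ N * v ^+ M * c * (c1 / w + 1) ^+ i * w^-1 ^+ (N - i) *
    (c2 * P * v^-1 + 1) ^+ j * (P / v) ^+ (M - j) =
    c * (w + c1) ^+ i * (c2 * P + v) ^+ j * P ^+ (M - j).
  have -> : w ^+ N = w ^+ i * w ^+ (N - i) by rewrite -exprD subnKC.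
  have -> : v ^+ M = v ^+ j * v ^+ (M - j) by rewrite -exprD subnKC.
  have -> : c1 / w + 1 = (w + c1) / w by field.
  have -> : c2 * P * v^-1 + 1 = (c2 * P + v) / v by field.
  by rewrite !exprVn !expr_div_n; field; rewrite !expf_neq0.
by rewrite !hornerE !exprM -/w -/v -/P; apply: dehomog.
Qed.

End Bivariate.

Lemma tofr_div_cross (K : fieldType) (a b a0 b0 : {poly {poly K}}) : b != 0 -> b0 != 0 ->
  tofr a / tofr b = tofr a0 / tofr b0 -> a * b0 = a0 * b.
Proof.
move=> b_neq0 b0_neq0 /eqP; rewrite eqr_div ?tofrac_eq0 //.
by rewrite /tofr -!tofracM tofrac_eq => /eqP.
Qed.

Lemma coefM_lowest (R : nzRingType) (A B : {poly R}) m :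
  (forall i, (i < m)%N -> A`_i = 0) -> (A * B)`_m = A`_m * B`_0.
Proof.
move=> A_low; rewrite coefM big_ord_recr /= subnn big1 ?add0r // => i _.
by rewrite A_low ?mul0r.
Qed.

Section Pole.
Variable K : closedFieldType.
Implicit Types (q : {poly {poly K}}) (phi : ser K).

Lemma eq_poly_nonroots (P Q W : {poly K}) : W != 0 ->
  (forall z, W.[z] != 0 -> P.[z] = Q.[z]) -> P = Q.
Proof.
move=> W_neq0 PQ; apply/eqP; rewrite -subr_eq0; apply: contraTT isT => PQ_neq0.
have /closed_nonrootP[z] : (P - Q) * W != 0 by rewrite mulf_neq0.
rewrite /root hornerM mulf_eq0 negb_or => /andP[PQz Wz].
by move: PQz; rewrite hornerD hornerN PQ // subrr eqxx.
Qed.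

Lemma eval2_poly_transf n d N M Phi c1 c2 q : bideg_le N M q ->
  eval2_poly n d N M Phi (transf (Some c1) (Some c2) N M q) = branch_poly c1 c2 n d M Phi q.
Proof.
move=> qNM; apply: (@eq_poly_nonroots _ _ 'X); first by rewrite polyX_eq0.
by move=> z; rewrite hornerX => z_neq0; apply: eval2_poly_transf_horner.
Qed.

Lemma branch_poly_cross_mul n d M M0 Phi c1 c2 (a b a0 b0 : {poly {poly K}}) :
  Phi != 0 -> a * b0 = a0 * b ->
  (size a <= M.+1)%N -> (size b <= M.+1)%N -> (size a0 <= M0.+1)%N -> (size b0 <= M0.+1)%N ->
  branch_poly c1 c2 n d M Phi a * branch_poly c1 c2 n d M0 Phi b0 =
  branch_poly c1 c2 n d M0 Phi a0 * branch_poly c1 c2 n d M Phi b.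
Proof.
move=> Phi_neq0 ab aM bM a0M b0M; apply: (eq_poly_nonroots Phi_neq0) => z Phiz.
rewrite !hornerM !branch_poly_horner //.
set x := c1 + _; set y := c2 + _.
have := congr1 (fun q => ev2 q x y) ab; rewrite /= !ev2M => ab_xy.
by rewrite mulrACA ab_xy; ring.
Qed.

Lemma coef_branch_poly n d N M k c1 c2 phi q m : bideg_le N M q -> tdeg_le phi d%:Z ->
  (m < k)%N -> (branch_poly c1 c2 n d M (trunc d%:Z k phi) q)`_m =
  coefAt (eval2 n (transf (Some c1) (Some c2) N M q) phi) ((n * N + d * M)%N%:Z - m%:Z).
Proof.
move=> qNM phi_d mk; rewrite -(eval2_poly_transf n d _ c1 c2 qNM).
have [_ trunc_eq] := approx_eval2 n (bideg_le_transf c1 c2 qNM) (approx_trunc k phi_d).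
by rewrite -trunc_eq // coef_trunc.
Qed.

(* Along the branch, [t]-degrees of [q(x, phi)] become [s]-adic valuations. *)
Lemma branch_poly_valuation n d N M c1 c2 phi q e : bideg_le N M q -> tdeg_le phi d%:Z ->
  has_tdeg (eval2 n (transf (Some c1) (Some c2) N M q) phi) e ->
  exists2 m : nat, e = (n * N + d * M)%N%:Z - m%:Z &
    forall k i, (i <= m)%N -> (i < k)%N ->
      ((branch_poly c1 c2 n d M (trunc d%:Z k phi) q)`_i != 0) = (i == m).
Proof.
move=> qNM phi_d [e_neq0 above_e].
have [U_bound _] := approx_eval2 n (bideg_le_transf c1 c2 qNM) (approx_trunc 0 phi_d).
have eU : e <= (n * N + d * M)%N%:Z.
  by rewrite leNgt; apply: contraNN e_neq0 => /U_bound ->.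
exists `|(n * N + d * M)%N%:Z - e|%N => [|k i im ik]; first exact: eq_sub_absz.
rewrite (coef_branch_poly n c1 c2 qNM phi_d ik).
have [-> | i_neq] := eqVneq i; first by rewrite -eq_sub_absz.
by rewrite above_e ?eqxx //; move: im i_neq; rewrite leq_eqVlt => /orP[/eqP-> /eqP //|]; lia.
Qed.

Lemma pole_denom_root (p : {poly {poly K}}) r a0 b0 c1 c2 :
  b0 != 0 -> r = tofr a0 / tofr b0 -> pole p r (Some c1, Some c2) -> ev2 b0 c1 c2 = 0.
Proof.
move=> b0_neq0 -> [_ [a [b [b_neq0 [r_ab]]]]].
set N := maxn _ _; set M := maxn _ _.
move=> /= -[n [phi [n_gt0 [_ [[d [phi_d d_gt0]] [da [db [A_da [B_db db_lt_da]]]]]]]]].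
case: d phi_d d_gt0 => // d phi_d d_gt0.
have ab := tofr_div_cross b_neq0 b0_neq0 (esym r_ab).
have aNM : bideg_le N M a by apply: bideg_le_deg; rewrite ?leq_maxl.
have bNM : bideg_le N M b by apply: bideg_le_deg; rewrite ?leq_maxr.
pose M0 := maxn (degy a0) (degy b0).
have a0M : (size a0 <= M0.+1)%N by apply: size_le_degy; rewrite leq_maxl.
have b0M : (size b0 <= M0.+1)%N by apply: size_le_degy; rewrite leq_maxr.
have [mA da_def vA] := branch_poly_valuation aNM phi_d.2 A_da.
have [mB db_def vB] := branch_poly_valuation bNM phi_d.2 B_db.
have mAB : (mA < mB)%N by move: db_lt_da; rewrite da_def db_def; lia.
pose Phi := trunc d%:Z mB.+1 phi.
have Phi0 : Phi`_0 != 0 by rewrite coef_trunc // subr0; exact: phi_d.1.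
have Phi_neq0 : Phi != 0 by apply: contraNneq Phi0 => ->; rewrite coef0.
have brA_mA : (branch_poly c1 c2 n d M Phi a)`_mA != 0 by rewrite vA ?eqxx //; lia.
have brA_low i : (i < mA)%N -> (branch_poly c1 c2 n d M Phi a)`_i = 0.
  by move=> iA; apply/eqP/negPn; rewrite vA ?ltn_eqF //; lia.
have brB_low i : (i <= mA)%N -> (branch_poly c1 c2 n d M Phi b)`_i = 0.
  by move=> iA; apply/eqP/negPn; rewrite vB ?ltn_eqF //; lia.
have := branch_poly_cross_mul n d c1 c2 Phi_neq0 ab aNM.1 bNM.1 a0M b0M.
move=> /(congr1 (fun P : {poly K} => P`_mA)) /=.
rewrite (mulrC (branch_poly c1 c2 n d M0 Phi a0)).
rewrite !coefM_lowest // => [|i /ltnW]; last exact: brB_low.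
rewrite brB_low // mul0r -horner_coef0 branch_poly_horner0 // => /eqP.
by rewrite !mulf_eq0 (negbTE brA_mA) expf_eq0 horner_coef0 (negbTE Phi0) andbF => /eqP.
Qed.

End Pole.

Lemma size_poly_unit (R : idomainType) (u : {poly R}) : u \is a GRing.unit -> size u = 1%N.
Proof. by rewrite poly_unitE => /andP[/eqP]. Qed.

Lemma polyC_unit (R : idomainType) (c : R) : (c%:P \is a GRing.unit) = (c \is a GRing.unit).
Proof.
rewrite poly_unitE size_polyC coefC /=.
by have [-> | c_neq0] := eqVneq c 0; rewrite ?unitr0.
Qed.

Section Elimination.
Variable K : closedFieldType.
Implicit Types (p q g h b w : {poly {poly K}}) (c : {poly K}).

Definition specx (a : K) g : {poly K} := map_poly (horner_eval a) g.

Lemma coef_specx a g j : (specx a g)`_j = (g`_j).[a].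
Proof. by rewrite coef_map /= horner_evalE. Qed.

Lemma specxZ a c g : specx a (c *: g) = c.[a] *: specx a g.
Proof. by apply/polyP => j; rewrite coefZ !coef_specx coefZ hornerM. Qed.

Lemma specx_eq0_scale a g : specx a g = 0 -> exists g', g = ('X - a%:P) *: g'.
Proof.
move=> ga; exists (map_poly (fun u => u %/ ('X - a%:P)) g).
apply/polyP => j; rewrite coefZ coef_map_id0 ?div0p // mulrC divpK //.
by rewrite dvdp_XsubCl /root -coef_specx ga coef0.
Qed.

(* Gauss's lemma for [K[x][y]]: a content [c] in [K[x]] dividing a product
   splits between the two factors. *)
Lemma scale_factor_split c q g h : c != 0 -> c *: q = g * h ->
  exists g1 h1 c1 c2, [/\ q = g1 * h1, g = c1 *: g1, h = c2 *: h1, c1 != 0 & c2 != 0].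
Proof.
have [n] := ubnP (size c); elim: n c q g h => // n IHn c q g h size_c c_neq0 cq.
have [/eqP/size_poly1P[γ γ_neq0 c_def] | c_nonconst] := eqVneq (size c) 1%N.
  rewrite c_def in cq; exists (γ^-1%:P *: g), h, γ%:P, 1.
  split; rewrite ?polyC_eq0 ?oner_eq0 ?scale1r //.
    by rewrite -scalerAl -cq scalerA -polyCM mulVf // scale1r.
  by rewrite scalerA -polyCM divff // scale1r.
have [a /factor_theorem[c' c_def]] := closed_rootP c c_nonconst.
have c'_neq0 : c' != 0 by apply: contraNneq c_neq0 => c'0; rewrite c_def c'0 mul0r.
have size_c' : (size c' < n)%N.
  by move: size_c; rewrite c_def size_mul ?polyXsubC_eq0 // size_XsubC addn2.
have XsubC_scaleI (Y Z : {poly {poly K}}) : ('X - a%:P) *: Y = ('X - a%:P) *: Z -> Y = Z.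
  by rewrite -!mul_polyC => /mulfI; apply; rewrite polyC_eq0 polyXsubC_eq0.
have cq' : ('X - a%:P) *: (c' *: q) = g * h by rewrite scalerA mulrC -c_def.
have /eqP : specx a g * specx a h = 0.
  rewrite /specx -rmorphM -cq; apply: etrans (specxZ a c q) _.
  by rewrite c_def hornerM hornerXsubC subrr mulr0 scale0r.
rewrite mulf_eq0 => /orP[/eqP/specx_eq0_scale[g' g_def] | /eqP/specx_eq0_scale[h' h_def]].
  have /IHn[//|//|g1 [h1 [c1 [c2 [-> g'_def -> c1_neq0 c2_neq0]]]]] : c' *: q = g' * h.
    by apply: XsubC_scaleI; rewrite cq' g_def scalerAl.
  exists g1, h1, (('X - a%:P) * c1), c2; split; rewrite ?mulf_neq0 ?polyXsubC_eq0 //.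
  by rewrite g_def g'_def scalerA.
have /IHn[//|//|g1 [h1 [c1 [c2 [-> -> h'_def c1_neq0 c2_neq0]]]]] : c' *: q = g * h'.
  by apply: XsubC_scaleI; rewrite cq' h_def scalerAr.
exists g1, h1, c1, (('X - a%:P) * c2); split; rewrite ?mulf_neq0 ?polyXsubC_eq0 //.
by rewrite h_def h'_def scalerA.
Qed.

Lemma irreducible2_specx_neq0 p a : irreducible2 p -> (1 < size p)%N -> specx a p != 0.
Proof.
move=> [_ [_ p_irr]] size_p; apply/negP => /eqP/specx_eq0_scale[p' p_def].
have [| /size_poly_unit p'_1] := p_irr _ _ (etrans p_def (esym (mul_polyC _ _))).
  by rewrite polyC_unit => /size_poly_unit; rewrite size_XsubC.
by move: size_p; rewrite p_def size_scale ?polyXsubC_eq0 // p'_1.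
Qed.

Lemma irreducible2_dvd_scale p c b w : irreducible2 p -> (1 < size p)%N -> c != 0 ->
  c *: b = p * w -> dvd2 p b.
Proof.
move=> [_ [_ p_irr]] size_p c_neq0 /(scale_factor_split c_neq0).
move=> [g1 [h1 [c1 [c2 [-> p_def _ c1_neq0 _]]]]].
have [| /size_poly_unit g1_1] := p_irr _ _ (etrans p_def (esym (mul_polyC _ _))); last first.
  by move: size_p; rewrite p_def size_scale // g1_1.
rewrite polyC_unit => c1_unit; exists (c1^-1 *: h1).
by rewrite p_def -scalerAl -scalerAr scalerA mulVr // scale1r mulrC.
Qed.

Lemma irreducible2_factor p c g w : irreducible2 p -> c != 0 -> (1 < size g)%N ->
  c *: p = w * g -> exists2 c', c' != 0 & g = c' *: p.
Proof.
move=> [_ [_ p_irr]] c_neq0 size_g /(scale_factor_split c_neq0).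
move=> [w1 [g1 [c1 [c2 [p_def _ g_def _ c2_neq0]]]]].
have [| /size_poly_unit g1_1] := p_irr _ _ p_def; last first.
  by move: size_g; rewrite g_def size_scale // g1_1.
rewrite poly_unitE => /andP[/eqP/eqP/size_poly1P[κ κ_neq0 w1_def] κ_unit].
exists (c2 / κ); first by rewrite mulf_neq0 ?invr_eq0.
by move: κ_unit; rewrite g_def p_def w1_def mul_polyC scalerA coefC => /divrK->.
Qed.

Lemma bezout_x p b : irreducible2 p -> (1 < size p)%N -> b != 0 -> ~ dvd2 p b ->
  exists R u v, R != 0 /\ R%:P = u * p + v * b.
Proof.
move=> p_irr size_p b_neq0 p_ndvd_b.
have [size_b | size_b] := leqP (size b) 1.
  exists b`_0, 0, 1; rewrite mul0r add0r mul1r -size1_polyC //; split=> //.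
  by apply: contraNneq b_neq0 => b0; rewrite (size1_polyC size_b) b0.
have [[u v] _ res_def] := resultant_in_ideal size_p size_b.
have [/eqP | ] := eqVneq (resultant p b) 0; last by exists (resultant p b), u, v.
rewrite resultant_eq0; set g := gcdp p b => size_g; case: p_ndvd_b.
have := Pdiv.Idomain.dvdp_gcdl p b; have := Pdiv.Idomain.dvdp_gcdr p b.
rewrite !Pdiv.Idomain.dvdp_eq -/g; move=> /eqP g_b /eqP g_p.
have [c' _ g_def] := irreducible2_factor p_irr (Pdiv.Idomain.lc_expn_scalp_neq0 _ _) size_g g_p.
apply: (irreducible2_dvd_scale p_irr size_p (Pdiv.Idomain.lc_expn_scalp_neq0 b g)
  (w := c' *: (b %/ g))).
by rewrite g_b g_def -!scalerAr mulrC.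
Qed.

End Elimination.

Lemma big_ord_widen_coef (R : nzRingType) (V : nmodType) (q : {poly R}) n
    (F : nat -> R -> V) : (size q <= n)%N -> (forall i, F i 0 = 0) ->
  \sum_(i < size q) F i q`_i = \sum_(i < n) F i q`_i.
Proof.
move=> qn F0; rewrite (big_ord_widen n (fun i => F i q`_i) qn) big_mkcond.
by apply: eq_bigr => i _; case: ltnP => // /(nth_default 0) ->.
Qed.

Section Fibers.
Variable K : closedFieldType.
Implicit Types (p : {poly {poly K}}).

Lemma size_coef_le_degx p j : (size (p`_j)%R <= (degx p).+1)%N.
Proof. exact: (bideg_le_deg (leqnn _) (leqnn (degy p))).2. Qed.

Lemma degx_eq0 p : (forall j, size (p`_j)%R <= 1)%N -> degx p = 0%N.
Proof.
move=> p_const; apply/eqP; rewrite -leqn0; apply/bigmax_leqP => j _.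
by rewrite leqn0 -subn1 subn_eq0 p_const.
Qed.

Lemma degx_witness p : (0 < degx p)%N -> exists j, size (p`_j)%R = (degx p).+1.
Proof.
move=> dx_gt0; have size_p : (0 < #|'I_(size p)|)%N.
  rewrite card_ord lt0n size_poly_eq0; apply: contraTneq dx_gt0 => ->.
  by rewrite -leqNgt /degx; apply/bigmax_leqP => j _; rewrite coef0 size_poly0.
have [j0 dx_def] := @bigop.eq_bigmax _ (fun j : 'I_(size p) => (size (p`_j)%R).-1) size_p.
by exists j0; move: dx_gt0; rewrite /degx dx_def; lia.
Qed.

Lemma finite_roots (P : {poly K}) : P != 0 -> finite_pred (fun c => P.[c] = 0).
Proof.
move=> P_neq0; have [r P_def] := closed_field_poly_normal P.
by exists r => c /rootP; rewrite P_def rootZ ?lead_coef_eq0 // root_prod_XsubC.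
Qed.

Lemma finite_P1_roots (P : {poly K}) (F : K -> K) : P != 0 -> (forall c, F c = P.[c]) ->
  finite_pred (fun y : P1 K => if y is Some c then F c = 0 else True).
Proof.
move=> P_neq0 FP; have [r Pr] := finite_roots P_neq0.
by exists (None :: map Some r) => -[c|] Fc; rewrite ?mem_head // inE map_f ?Pr -?FP.
Qed.

Definition fiber_y_poly p (X : K * K) : {poly K} :=
  \poly_(j < size p) \sum_(i < size p`_j) p`_j`_i * X.2 ^+ i * X.1 ^+ (degx p - i).

Definition fiber_x_poly p (Y : K * K) : {poly K} :=
  \poly_(i < (degx p).+1) \sum_(j < size p) p`_j`_i * Y.2 ^+ j * Y.1 ^+ (degy p - j).

Lemma bihom_eval_fiber_y p X c : bihom_eval p X (hcoord (Some c)) = (fiber_y_poly p X).[c].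
Proof.
rewrite horner_poly; apply: eq_bigr => j _; rewrite mulr_suml; apply: eq_bigr => i _.
by rewrite /= !expr1n !mulr1.
Qed.

Lemma bihom_eval_fiber_x p Y c : bihom_eval p (hcoord (Some c)) Y = (fiber_x_poly p Y).[c].
Proof.
rewrite horner_poly /bihom_eval /= (eq_bigr (fun j : 'I_(size p) =>
  \sum_(i < (degx p).+1) p`_j`_i * c ^+ i * Y.2 ^+ j * Y.1 ^+ (degy p - j))) => [|j _].
  rewrite exchange_big /=; apply: eq_bigr => i _; rewrite mulr_suml.
  by apply: eq_bigr => j _; ring.
rewrite (big_ord_widen_coef (F := fun i a => a * c ^+ i * 1 ^+ (degx p - i) * Y.2 ^+ j *
  Y.1 ^+ (degy p - j)) (size_coef_le_degx p j)) => [|i]; last by rewrite !mul0r.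
by apply: eq_bigr => i _; rewrite expr1n mulr1.
Qed.

Lemma fiber_y_poly_Some p a : fiber_y_poly p (hcoord (Some a)) = specx a p.
Proof.
apply/polyP => j; rewrite coef_poly coef_specx.
case: ltnP => [_ | jp]; last by rewrite nth_default ?horner0.
by rewrite horner_coef; apply: eq_bigr => i _; rewrite /= expr1n mulr1.
Qed.

Lemma fiber_y_poly_None p : fiber_y_poly p (hcoord None) = \poly_(j < size p) p`_j`_(degx p).
Proof.
apply/polyP => j; rewrite !coef_poly; case: ltnP => // _ /=.
rewrite (big_ord_widen_coef (F := fun i a => a * 1 ^+ i * 0 ^+ (degx p - i))
  (size_coef_le_degx p j)) => [|i]; last by rewrite !mul0r.
rewrite big_ord_recr /= subnn expr1n !mulr1 big1 ?add0r // => i _.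
by rewrite expr0n subn_eq0 leqNgt ltn_ord mulr0.
Qed.

Lemma fiber_x_poly_Some p b : fiber_x_poly p (hcoord (Some b)) = p.[b%:P].
Proof.
apply/polyP => i; rewrite coef_poly horner_coef coef_sum.
case: ltnP => [_ | dx_i]; last first.
  rewrite big1 // => j _; rewrite -polyC_exp coefMC nth_default ?mul0r //.
  exact: leq_trans (size_coef_le_degx p j) dx_i.
by apply: eq_bigr => j _; rewrite -polyC_exp coefMC /= expr1n mulr1.
Qed.

Lemma fiber_x_poly_None p : p != 0 -> fiber_x_poly p (hcoord None) = lead_coef p.
Proof.
move=> p_neq0; have size_p : size p = (degy p).+1 by rewrite prednK // size_poly_gt0.
apply/polyP => i; rewrite coef_poly; case: ltnP => [_ | dx_i] /=; last first.
  by rewrite lead_coefE nth_default //; apply: leq_trans (size_coef_le_degx p _) dx_i.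
rewrite size_p big_ord_recr /= subnn expr1n !mulr1 big1 ?add0r /lead_coefE ?size_p // => j _.
by rewrite expr0n subn_eq0 leqNgt ltn_ord mulr0.
Qed.

End Fibers.

Section Curve.
Variable K : closedFieldType.
Variable p : {poly {poly K}}.
Hypothesis p_irr : irreducible2 p.
Hypothesis dx_gt0 : (0 < degx p)%N.
Hypothesis dy_gt0 : (0 < degy p)%N.

Let size_p : (1 < size p)%N.
Proof. by move: dy_gt0; rewrite /degy; case: (size p) => [|[|]]. Qed.

Lemma finite_fiber_y X : finite_pred (fun y => onC p (X, y)).
Proof.
have fiber_neq0 : fiber_y_poly p (hcoord X) != 0.
  case: X => [a|]; first by rewrite fiber_y_poly_Some irreducible2_specx_neq0.
  have [j0 size_j0] := degx_witness dx_gt0.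
  have j0p : (j0 < size p)%N.
    rewrite ltnNge; apply: contraTN isT => /(nth_default 0) p_j0.
    by move: size_j0; rewrite p_j0 size_poly0.
  rewrite fiber_y_poly_None; apply/eqP => /(congr1 (fun P : {poly K} => P`_j0)).
  rewrite coef_poly j0p coef0 => /eqP; apply/negP.
  by rewrite -[degx p]/((degx p).+1.-1) -size_j0 -lead_coefE lead_coef_eq0 -size_poly_gt0 size_j0.
apply: finite_pred_sub (finite_P1_roots fiber_neq0 (bihom_eval_fiber_y p (hcoord X))).
by move=> [c|].
Qed.

Lemma finite_fiber_x Y : finite_pred (fun x => onC p (x, Y)).
Proof.
have p_neq0 : p != 0 by move: p_irr => [].
have fiber_neq0 : fiber_x_poly p (hcoord Y) != 0.
  case: Y => [b|]; last by rewrite fiber_x_poly_None ?lead_coef_eq0.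
  rewrite fiber_x_poly_Some; apply/negP => /factor_theorem[q p_def].
  have [| /size_poly_unit] := p_irr.2.2 _ _ p_def; last by rewrite size_XsubC.
  rewrite poly_unitE => /andP[/eqP/eqP/size_poly1P[κ _ q_def]].
  rewrite q_def coefC /= => /size_poly_unit size_κ.
  move: dx_gt0; rewrite degx_eq0 // => j; rewrite p_def q_def coefCM.
  apply: leq_trans (size_polyMleq _ _) _; rewrite size_κ add1n /=.
  rewrite coefB coefX coefC; case: j => [|[|j]] /=.
  - by rewrite sub0r size_polyN size_polyC_leq1.
  - by rewrite subr0 size_poly1.
  - by rewrite subr0 size_poly0.
apply: finite_pred_sub (finite_P1_roots fiber_neq0 (fun c => bihom_eval_fiber_x p (hcoord Y) c)).
by move=> [c|].
Qed.

Lemma onC_ev2 c1 c2 : onC p (Some c1, Some c2) -> ev2 p c1 c2 = 0.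
Proof.
move=> on_c; rewrite -[RHS]on_c ev2E /bihom_eval; apply: eq_bigr => j _.
by apply: eq_bigr => i _; rewrite /= !expr1n !mulr1.
Qed.

Lemma finite_adjC U : finite_pred (adjC p U).
Proof.
case: U => x y; have := finite_predU (finite_pred_image (fun y' => (x, y')) (finite_fiber_y x))
  (finite_pred_image (fun x' => (x', y)) (finite_fiber_x y)).
apply: finite_pred_sub => -[x' y'] [_ [/= on_x'y' [-> | ->]]] /=.
  by left; exists y'.
by right; exists x'.
Qed.

Lemma finite_poles r : localp p r -> finite_pred (pole p r).
Proof.
move=> [a0 [b0 [p_ndvd_b0 r_def]]].
have b0_neq0 : b0 != 0 by apply: contra_not_neq p_ndvd_b0 => ->; exists 0; rewrite mul0r.
have [R [u [v [R_neq0 R_def]]]] := bezout_x p_irr size_p b0_neq0 p_ndvd_b0.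
have [rs R_rs] := finite_roots R_neq0.
have fin_affine : finite_pred (fun V => exists2 c, c \in rs & V.1 = Some c /\ onC p V).
  apply: finite_pred_bigcup => c _.
  apply: finite_pred_sub (finite_pred_image (fun y => (Some c, y)) (finite_fiber_y (Some c))).
  by move=> [x y] /= [-> on_xy]; exists y.
have fin_infinity := finite_predU (finite_pred_image (fun y => (None, y)) (finite_fiber_y None))
  (finite_pred_image (fun x => (x, None)) (finite_fiber_x None)).
apply: finite_pred_sub (finite_predU fin_infinity fin_affine).
move=> -[[c1|] [c2|]] pole_V /=; have on_V := pole_V.1.
- right; exists c1 => //; apply: R_rs.
  have := congr1 (fun Q => ev2 Q c1 c2) R_def.
  by rewrite /= ev2C ev2D !ev2M onC_ev2 // (pole_denom_root b0_neq0 r_def pole_V) !mulr0 addr0.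
- by left; right; exists (Some c1).
- by left; left; exists (Some c2).
- by left; left; exists None.
Qed.

End Curve.

Unset Implicit Arguments. Set Strict Implicit.

Theorem proposition10 (K : closedFieldType) (hK : [pchar K] =i pred0)
  (p : {poly {poly K}}) (r : {fraction {poly {poly K}}}) :
  irreducible2 p ->
  (0 < degx p)%N -> (0 < degy p)%N ->
  Fp_trivial p ->
  localp p r -> ~ idealp p r ->
  forall S : P1 K * P1 K, pole p r S -> infinite_set (curve_orbit p S) ->
  exists f : nat -> P1 K * P1 K,
    (forall i, curve_orbit p S (f i)) /\
    injective f /\
    (forall i, (f i).1 = (f i.+1).1 \/ (f i).2 = (f i.+1).2) /\
    pole p r (f 0%N) /\
    (forall i, (0 < i)%N -> ~ pole p r (f i)).
Proof.
move=> p_irr dx_gt0 dy_gt0 _ r_loc _ S pole_S orbit_inf.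
have component_inf : ~ finite_pred (clos_refl_trans _ (adjC p) S).
  by move=> fin; apply: orbit_inf; apply: finite_pred_sub fin => V [].
have [f [f_orbit f_inj f_adj f0 f_pos]] := marked_ray (finite_adjC p_irr dx_gt0 dy_gt0)
  (finite_poles p_irr dx_gt0 dy_gt0 r_loc) pole_S component_inf.
exists f; split; first by move=> i; split; [exact: pole_S.1 | exact: f_orbit].
split=> //; split=> [i | //]; by have [_ []] := f_adj i.
Qed.
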